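(* Let $\mathcal{H}$ and $\mathcal{K}$ be Hilbert spaces, let $V\in\mathcal{B}(\mathcal{H})$ be an isometry, let $T\in\mathcal{B}(\mathcal{K})$ be a power bounded operator, and let $X\in\mathcal{B}(\mathcal{H},\mathcal{K})$. Then the equation $X=TZ-ZV$ has a bounded solution $Z\in\mathcal{B}(\mathcal{H},\mathcal{K})$ satisfying $Z(I-VV^* )=0$ if and only if $$\sup_{n\ge 0}\Big\|\sum_{j=0}^{n}T^jXV^{*\,j+1}\Big\|<\infty.$$
   Context: $\mathcal{B}(\mathcal{H},\mathcal{K})$ denotes the bounded linear operators from $\mathcal{H}$ to $\mathcal{K}$, and $\mathcal{B}(\mathcal{H})=\mathcal{B}(\mathcal{H},\mathcal{H})$. An operator $T$ is power bounded if $\sup_{n\ge0}\|T^n\|<\infty$. $I$ denotes the identity operator. *)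

From HB Require Import structures.
From mathcomp Require Import all_boot all_order all_algebra.
From mathcomp Require Import all_classical all_reals all_analysis.
From mathcomp Require Import complex.
Import Order.TTheory GRing.Theory Num.Theory.
Import numFieldNormedType.Exports.

Set Implicit Arguments.
Unset Strict Implicit.
Unset Printing Implicit Defensive.

Local Open Scope ring_scope.

(* Complex Hilbert spaces: a complete normed R[i]-module H (R : realType)
   whose norm comes from an inner product [ip], linear in the first
   argument and conjugate-linear in the second. *)
Definition is_inner_product (R : realType) (H : normedModType R[i])
    (ip : H -> H -> R[i]) : Prop :=
  [/\ forall (a : R[i]) (x y z : H), ip (a *: x + y) z = a * ip x z + ip y z,
      forall x y : H, ip x y = (ip y x)^* &
      forall x : H, ip x x = `|x| ^+ 2].

Definition bounded_op (R : realType) (H K : normedModType R[i])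
    (f : H -> K) : Prop :=
  linear f /\ continuous f.

Definition is_adjoint (R : realType) (H K : normedModType R[i])
    (ipH : H -> H -> R[i]) (ipK : K -> K -> R[i])
    (f : H -> K) (fs : K -> H) : Prop :=
  forall (x : H) (y : K), ipK (f x) y = ipH x (fs y).

Definition is_isometry (R : realType) (H : normedModType R[i]) (V : H -> H) : Prop :=
  forall x : H, `|V x| = `|x|.

Definition uniformly_bounded (R : realType) (H K : normedModType R[i])
    (S : nat -> H -> K) : Prop :=
  exists M : R, forall (n : nat) (x : H), `|S n x| <= (M%:C)%C * `|x|.

Definition power_bounded (R : realType) (K : normedModType R[i]) (T : K -> K) : Prop :=
  uniformly_bounded (fun n : nat => iter n T).

From HB Require Import structures.
From mathcomp Require Import all_boot all_order all_algebra.
From mathcomp Require Import all_classical all_reals all_analysis.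
From mathcomp Require Import complex.
From mathcomp Require Import ring.
Import Order.TTheory GRing.Theory Num.Theory.
Import numFieldNormedType.Exports.
Local Open Scope classical_set_scope.
Local Open Scope ring_scope.
Set Implicit Arguments.
Unset Strict Implicit.
Unset Printing Implicit Defensive.

(* Necessity: if X = TZ - ZV and Z V V^* = Z, then
   T^j X V^*(j+1) = T^(j+1) Z V^*(j+1) - T^j Z V^*j, so the partial sums telescope
   to T^(n+1) Z V^*(n+1) - Z, which is bounded since T is power bounded and V^* is
   a contraction.
   Sufficiency: the partial sums P_n satisfy P_(n+1) = T P_n V^* + X V^*, hence
   their Cesaro means Y_N are uniformly bounded and satisfy
   Y_N = T Y_N V^* + X V^* up to an error of norm O(1/N).  For each x, the
   ultralimit along a free ultrafilter on nat of the bounded scalars <y, Y_N x> is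
   a bounded functional of y; representing it by Riesz' theorem gives a weak limit
   W x, and W is a bounded operator with W = T W V^* + X V^*.  As V^* V = I, the
   operator Z := -W solves X = TZ - ZV, and Z vanishes on the range of
   I - V V^* because W factors through V^*. *)


Section LinearFunctions.
Variables (C : pzRingType) (U W : lmodType C) (f : U -> W).
Hypothesis f_lin : linear f.

Lemma lin0 : f 0 = 0.
Proof.
have := f_lin 1 0 0; rewrite !scale1r addr0 => h.
by apply: (addrI (f 0)); rewrite addr0 -h.
Qed.

Lemma linD u v : f (u + v) = f u + f v.
Proof. by have := f_lin 1 u v; rewrite !scale1r. Qed.

Lemma linZ a u : f (a *: u) = a *: f u.
Proof. by have := f_lin a u 0; rewrite !addr0 lin0 addr0. Qed.

Lemma linN u : f (- u) = - f u.
Proof. by rewrite -scaleN1r linZ scaleN1r. Qed.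

Lemma linB u v : f (u - v) = f u - f v.
Proof. by rewrite linD linN. Qed.

Lemma lin_sum I (r : seq I) (P : pred I) (F : I -> U) :
  f (\sum_(i <- r | P i) F i) = \sum_(i <- r | P i) f (F i).
Proof. exact: (big_morph f linD lin0). Qed.

End LinearFunctions.

Lemma linear_comp (C : pzRingType) (U W Y : lmodType C) (f : U -> W) (g : W -> Y) :
  linear f -> linear g -> linear (g \o f).
Proof. by move=> f_lin g_lin a u v /=; rewrite f_lin g_lin. Qed.

Lemma linear_iter (C : pzRingType) (U : lmodType C) (f : U -> U) n :
  linear f -> linear (iter n f).
Proof. by move=> f_lin; elim: n => [|n IHn] a u v //=; rewrite IHn f_lin. Qed.

Lemma linear_sumf (C : comPzRingType) (U W : lmodType C) I (r : seq I) (P : pred I)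
    (F : I -> U -> W) :
  (forall i, linear (F i)) -> linear (fun x => \sum_(i <- r | P i) F i x).
Proof.
move=> F_lin a u v.
by rewrite (eq_bigr _ (fun i _ => F_lin i a u v)) big_split /= scaler_sumr.
Qed.

Lemma linear_scalef (C : comPzRingType) (U W : lmodType C) (f : U -> W) c :
  linear f -> linear (fun x => c *: f x).
Proof. by move=> f_lin a u v; rewrite f_lin scalerDr !scalerA mulrC. Qed.

Section InnerProduct.
Variables (R : realType) (H : normedModType R[i]) (ip : H -> H -> R[i]).
Hypothesis hip : is_inner_product ip.

Lemma ip_linear z : linear (fun x => ip x z : R[i]^o).
Proof. by case: hip => ipDZ _ _ a x y; rewrite ipDZ. Qed.

Lemma ipC x y : ip x y = (ip y x)^*.
Proof. by case: hip. Qed.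

Lemma ipxx x : ip x x = `|x| ^+ 2.
Proof. by case: hip. Qed.

Lemma conj_ipxx x : (ip x x)^* = ip x x.
Proof. by rewrite -ipC. Qed.

Lemma ipDl x y z : ip (x + y) z = ip x z + ip y z.
Proof. exact: (linD (ip_linear z)). Qed.

Lemma ipZl a x z : ip (a *: x) z = a * ip x z.
Proof. exact: (linZ (ip_linear z)). Qed.

Lemma ip0l z : ip 0 z = 0.
Proof. exact: (lin0 (ip_linear z)). Qed.

Lemma ipNl x z : ip (- x) z = - ip x z.
Proof. exact: (linN (ip_linear z)). Qed.

Lemma ipBl x y z : ip (x - y) z = ip x z - ip y z.
Proof. exact: (linB (ip_linear z)). Qed.

Lemma ipDr x y z : ip z (x + y) = ip z x + ip z y.
Proof. by rewrite ipC ipDl rmorphD (ipC z x) (ipC z y). Qed.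

Lemma ipZr a x z : ip z (a *: x) = a^* * ip z x.
Proof. by rewrite ipC ipZl rmorphM (ipC z x). Qed.

Lemma ip0r z : ip z 0 = 0.
Proof. by rewrite ipC ip0l rmorph0. Qed.

Lemma ipNr x z : ip z (- x) = - ip z x.
Proof. by rewrite ipC ipNl rmorphN (ipC z x). Qed.

Lemma ipBr x y z : ip z (x - y) = ip z x - ip z y.
Proof. by rewrite ipDr ipNr. Qed.

Lemma ip_injr u v : (forall y, ip y u = ip y v) -> u = v.
Proof.
move=> uv; apply/eqP; rewrite -subr_eq0 -normr_eq0 -sqrf_eq0.
by rewrite -ipxx ipBr uv subrr.
Qed.

Lemma normB_sqr u v : `|u - v| ^+ 2 = `|u| ^+ 2 - ip u v - ip v u + `|v| ^+ 2.
Proof. by rewrite -!ipxx ipBl !ipBr; ring. Qed.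

Lemma parallelogram (u v : H) :
  `|u - v| ^+ 2 = 2 * `|u| ^+ 2 + 2 * `|v| ^+ 2 - `|u + v| ^+ 2.
Proof. by rewrite -!ipxx ipBl !ipBr !ipDl !ipDr; ring. Qed.

Lemma cauchy_schwarz x y : `|ip x y| <= `|x| * `|y|.
Proof.
have [->|y0] := eqVneq y 0; first by rewrite ip0r !normr0 mulr0.
have yy0 : ip y y != 0 by rewrite ipxx expf_eq0 /= normr_eq0.
pose t := ip x y / ip y y.
have proj : `|x - t *: y| ^+ 2 = `|x| ^+ 2 - ip x y * (ip x y)^* / ip y y.
  rewrite -!ipxx ipBl !ipBr !ipZl !ipZr (ipC y x) /t rmorphM fmorphV /= conj_ipxx.
  by field.
have : ip x y * (ip x y)^* / ip y y <= `|x| ^+ 2.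
  by rewrite -subr_ge0 -proj exprn_ge0.
rewrite -normCK ipxx ler_pdivrMr ?exprn_gt0 ?normr_gt0 // -exprMn.
by rewrite ler_pXn2r // ?nnegrE ?mulr_ge0.
Qed.

Lemma cauchy_schwarz_le u y c : `|u| <= c -> `|ip y u| <= `|y| * c.
Proof. by move=> uc; apply: le_trans (cauchy_schwarz y u) _; apply: ler_wpM2l. Qed.

End InnerProduct.

Section ComplexScalars.
Variable R : realType.

Lemma div_natS_lt_eventually (c e : R[i]) : 0 <= c -> 0 < e ->
  exists N : nat, forall n, (N <= n)%N -> c / n.+1%:R < e.
Proof.
move=> /[dup] /ger0_real /complex_realP[cr ->]; rewrite ler0c => c0.
move=> /[dup] /gtr0_real /complex_realP[er ->]; rewrite ltcR => e0.
exists (Num.Def.archi_bound (cr / er)) => n Nn.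
rewrite -(rmorph_nat (real_complex R)) -fmorphV -rmorphM ltcR.
rewrite ltr_pdivrMr ?ltr0n // mulrC -ltr_pdivrMr //.
apply: lt_le_trans (archi_boundP _) _; first by rewrite divr_ge0 // ltW.
by rewrite ler_nat (leq_trans Nn).
Qed.

Lemma cvg_div_natS_bound (V : normedModType R[i]) (u : nat -> V) (c : R[i]) :
  (forall n, `|u n| <= c / n.+1%:R) -> u @ \oo --> 0.
Proof.
move=> uc.
have c0 : 0 <= c by have := uc 0%N; rewrite divr1; apply: le_trans.
apply/cvgrPdist_lt => e e0.
have [N hN] := div_natS_lt_eventually c0 e0.
apply: filterS (nbhs_infty_ge N) => n /= Nn.
by rewrite sub0r normrN; apply: le_lt_trans (uc n) (hN n Nn).
Qed.

Lemma eq0_div_natS_bound (z c : R[i]) : (forall n, `|z| <= c / n.+1%:R) -> z = 0.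
Proof.
move=> zc; have := cvg_div_natS_bound (u := fun=> z : R[i]^o) zc.
move=> /(cvg_lim (@norm_hausdorff _ _)).
by rewrite lim_cst //; exact: norm_hausdorff.
Qed.

End ComplexScalars.

Lemma cauchy_rate_lim (R : realType) (K : completeNormedModType R[i])
    (u : nat -> K) (c : R[i]) :
  0 <= c -> (forall n m, (n <= m)%N -> `|u n - u m| <= c / n.+1%:R) ->
  exists x, forall n, `|u n - x| <= c / n.+1%:R.
Proof.
move=> c0 u_cauchy.
have u_cvg : cvg (u @ \oo).
  apply: cauchy_cvg; apply: cauchy_exP => e e0.
  have [N hN] := div_natS_lt_eventually c0 e0.
  exists (u N); apply: filterS (nbhs_infty_ge N) => n /= Nn.
  by rewrite -ball_normE /=; apply: le_lt_trans (u_cauchy _ _ Nn) (hN _ (leqnn N)).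
exists (lim (u @ \oo)) => n.
apply/ler_addgt0Pr => e e0.
have u_near := cvgr_dist_lt _ _ u_cvg _ e0.
have [m [nm um]] := filter_ex (filterI (nbhs_infty_ge n) (u_near _)).
apply: le_trans (ler_distD (u m) _ _) _.
by apply: lerD; [exact: u_cauchy | rewrite distrC ltW].
Qed.

Section RieszRepresentation.
Variables (R : realType) (K : completeNormedModType R[i]) (ip : K -> K -> R[i]).
Hypothesis hip : is_inner_product ip.
Variables (f : K -> R[i]) (C : R[i]).
Hypotheses (fD : {morph f : u v / u + v}) (fZ : forall a u, f (a *: u) = a * f u).
Hypotheses (C0 : 0 <= C) (fC : forall u, `|f u| <= C * `|u|).

Let f_linear : linear (f : K -> R[i]^o).
Proof. by move=> a u v; rewrite fD fZ. Qed.

Let d : R := inf [set complex.Re (`|x| ^+ 2) | x in [set x | f x = 1]].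

Let eps (n : nat) : R[i] := n.+1%:R^-1 ^+ 2.

Lemma hyperplane_inf_le x : f x = 1 -> d%:C%C <= `|x| ^+ 2.
Proof.
move=> fx; rewrite -[X in _ <= X]RRe_real ?ger0_real ?exprn_ge0 // lecR.
apply: ge_inf; last by exists x.
by exists 0 => _ [y _ <-]; rewrite -ler0c RRe_real ?ger0_real ?exprn_ge0.
Qed.

Section Minimizing.
Variable xs : nat -> K.
Hypothesis fxs : forall n, f (xs n) = 1.
Hypothesis xs_min : forall n, `|xs n| ^+ 2 <= d%:C%C + eps n.

Lemma minimizing_cauchy n m : (n <= m)%N -> `|xs n - xs m| <= 2 / n.+1%:R.
Proof.
move=> nm.
have mid : 4 * d%:C%C <= `|xs n + xs m| ^+ 2.
  have := hyperplane_inf_le (x := 2^-1 *: (xs n + xs m)).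
  rewrite fZ fD !fxs mulVf ?pnatr_eq0 // => /(_ erefl).
  rewrite normrZ exprMn normfV normr_nat => h.
  apply: le_trans (ler_wpM2l (ler0n _ 4) h) _.
  by rewrite le_eqVlt; apply/predU1P; left; field; rewrite ?pnatr_eq0.
have eps_mn : eps m <= eps n.
  rewrite /eps ler_pXn2r ?nnegrE ?invr_ge0 ?ler0n // lef_pV2 ?posrE ?ltr0n //.
  by rewrite ler_nat.
suff : `|xs n - xs m| ^+ 2 <= (2 / n.+1%:R) ^+ 2.
  by rewrite ler_pXn2r ?nnegrE ?divr_ge0 ?ler0n.
rewrite (parallelogram hip) //.
apply: (@le_trans _ _ (2 * (d%:C%C + eps n) + 2 * (d%:C%C + eps n) - 4 * d%:C%C)).
  apply: lerB mid; apply: lerD; rewrite ler_pM2l ?ltr0n //.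
  exact: le_trans (xs_min m) (lerD (lexx _) eps_mn).
by rewrite /eps le_eqVlt; apply/predU1P; left; field; rewrite ?pnatr_eq0.
Qed.

Lemma minimizing_orth y n : f y = 0 -> `|ip y (xs n)| <= `|y| / n.+1%:R.
Proof.
move=> fy.
have [->|y0] := eqVneq y 0; first by rewrite (ip0l hip) !normr0 mul0r.
have yy0 : ip y y != 0 by rewrite (ipxx hip) expf_eq0 /= normr_eq0.
pose c := ip y (xs n).
(* Moving xs n along y stays on the hyperplane and lowers the norm by |c|^2/|y|^2. *)
have := hyperplane_inf_le (x := xs n - (c^* / ip y y) *: y).
rewrite (linB f_linear) fZ fy mulr0 subr0 fxs => /(_ erefl).
rewrite -(ipxx hip) (ipBl hip) !(ipBr hip) !(ipZl hip) !(ipZr hip) (ipxx hip).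
rewrite -/c (ipC hip (xs n) y) -/c.
rewrite rmorphM fmorphV /= conjCK (conj_ipxx hip) => h.
have : c * c^* / ip y y <= eps n.
  rewrite -(lerD2l (d%:C%C)) -lerBrDr.
  apply: le_trans (lerB (xs_min n) (lexx _)).
  by apply: le_trans h _; rewrite le_eqVlt; apply/predU1P; left; field.
rewrite -normCK (ipxx hip) ler_pdivrMr ?exprn_gt0 ?normr_gt0 // /eps -exprMn.
by rewrite ler_pXn2r ?nnegrE ?mulr_ge0 ?invr_ge0 ?ler0n // mulrC.
Qed.

End Minimizing.

Section NonzeroFunctional.
Variable x1 : K.
Hypothesis fx1 : f x1 = 1.

Lemma exists_minimizing :
  exists xs : nat -> K, forall n, f (xs n) = 1 /\ `|xs n| ^+ 2 <= d%:C%C + eps n.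
Proof.
have D_inf : has_inf [set complex.Re (`|x| ^+ 2) | x in [set x | f x = 1]].
  split; first by exists (complex.Re (`|x1| ^+ 2)), x1.
  by exists 0 => _ [y _ <-]; rewrite -ler0c RRe_real ?ger0_real ?exprn_ge0.
suff /choice[xs xs_min] n : exists x, f x = 1 /\ `|x| ^+ 2 <= d%:C%C + eps n.
  by exists xs.
have eps0 : (0 : R) < n.+1%:R^-1 ^+ 2 by rewrite exprn_gt0 // invr_gt0 ltr0n.
have [_ [x fx <-] x_lt] := inf_adherent eps0 D_inf.
exists x; split => //.
rewrite -[X in X <= _]RRe_real ?ger0_real ?exprn_ge0 // /eps.
by rewrite -(rmorph_nat (real_complex R)) -fmorphV -rmorphXn -rmorphD lecR ltW.
Qed.

Lemma exists_kernel_normal : exists x0, f x0 = 1 /\ forall y, f y = 0 -> ip y x0 = 0.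
Proof.
have [xs /all_and2[fxs xs_min]] := exists_minimizing.
have [x0 xs_x0] := cauchy_rate_lim (ler0n _ 2) (minimizing_cauchy fxs xs_min).
have fx0 : f x0 = 1.
  apply/eqP; rewrite -subr_eq0; apply/eqP/(@eq0_div_natS_bound _ _ (C * 2)) => n.
  have -> : f x0 - 1 = f (x0 - xs n) by rewrite (linB f_linear) fxs.
  rewrite -mulrA; apply: le_trans (fC _) _.
  by apply: ler_wpM2l => //; rewrite distrC.
exists x0; split => // y fy.
apply: (@eq0_div_natS_bound _ _ (3 * `|y|)) => n.
rewrite -[ip y x0](subrK (ip y (xs n))) -(ipBr hip).
have x0_xs : `|x0 - xs n| <= 2 / n.+1%:R by rewrite distrC.
apply: le_trans (ler_normD _ _) _.
apply: le_trans (lerD (cauchy_schwarz_le hip y x0_xs)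
                      (minimizing_orth fxs xs_min n fy)) _.
by rewrite le_eqVlt; apply/predU1P; left; field; rewrite ?pnatr_eq0.
Qed.

End NonzeroFunctional.

Lemma riesz_representation : exists r, forall u, f u = ip u r.
Proof.
have [f0|/existsNP[u0 /eqP fu0]] := pselect (forall u, f u = 0).
  by exists 0 => u; rewrite f0 (ip0r hip).
have fu1 : f ((f u0)^-1 *: u0) = 1 by rewrite fZ mulVf.
have [x0 [fx0 x0_normal]] := exists_kernel_normal fu1.
have x0x0 : ip x0 x0 != 0.
  rewrite (ipxx hip) expf_eq0 /= normr_eq0; apply: contra_eq_neq fx0 => ->.
  by rewrite (lin0 f_linear) eq_sym oner_eq0.
exists ((ip x0 x0)^-1 *: x0) => w.
have := x0_normal (w - f w *: x0).
rewrite (linB f_linear) fZ fx0 mulr1 subrr (ipBl hip) (ipZl hip) => /(_ erefl) /eqP.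
rewrite subr_eq0 => /eqP w_x0.
by rewrite (ipZr hip) w_x0 fmorphV /= (conj_ipxx hip) mulrC mulrK.
Qed.

End RieszRepresentation.

Lemma fmap_ultra (T U : Type) (f : T -> U) (F : set_system T) :
  UltraFilter F -> UltraFilter (f @ F).
Proof.
move=> F_ultra; split; first exact: fmap_proper_filter.
move=> G' G'_proper fF_G'; rewrite eqEsubset; split => // A G'A.
have [//|FnA] := in_ultra_setVsetC (f @^-1` A) F_ultra.
have G'nA : G' (~` A) by apply: fF_G'.
by exfalso; apply: (filter_not_empty G'); rewrite -(setICr A); exact: filterI.
Qed.

Section ComplexParts.
Variable R : realType.

Lemma Re_le_norm (z : R[i]) : `|complex.Re z| <= complex.Re `|z|.
Proof. by rewrite normc_def /= -sqrtr_sqr ler_wsqrtr // lerDl sqr_ge0. Qed.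

Lemma Im_le_norm (z : R[i]) : `|complex.Im z| <= complex.Re `|z|.
Proof. by rewrite normc_def /= -sqrtr_sqr ler_wsqrtr // lerDr sqr_ge0. Qed.

Lemma norm_le_ReIm (z : R[i]) :
  `|z| <= ((`|complex.Re z| + `|complex.Im z|)%:C)%C.
Proof.
rewrite normc_def lecR -[X in _ <= X]ger0_norm ?addr_ge0 // -sqrtr_sqr.
rewrite ler_wsqrtr // sqrrD !real_normK ?num_real //.
by rewrite -addrA lerD2l lerDr mulrn_wge0 // mulr_ge0.
Qed.

End ComplexParts.

Definition bounded_seq (C : numDomainType) (V : normedZmodType C) (u : nat -> V) :=
  exists M : C, forall n, `|u n| <= M.

Section UltraLimit.
Variables (R : realType) (G : set_system nat).
Hypotheses (G_ultra : UltraFilter G) (G_free : \oo `<=` G).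
Local Notation C := (R[i] : numFieldType).

Lemma ultra_cvg_real (u : nat -> R) (M : R) :
  (forall n, `|u n| <= M) -> exists l : R, u @ G --> l.
Proof.
move=> uM; have := @segment_compact R (- M) M.
rewrite compact_ultra => /(_ (u @ G) (fmap_ultra u G_ultra)) [|l [_ ul]].
  by apply: (@filterE _ G) => n /=; rewrite in_itv /= -ler_norml.
by exists l.
Qed.

Lemma ultra_cvg (a : nat -> C) : bounded_seq a -> exists l : C, a @ G --> l.
Proof.
move=> [M aM].
have bound_part (p : R[i] -> R) : (forall z, `|p z| <= complex.Re `|z|) ->
    exists l : R, (p \o a) @ G --> l.
  move=> pz; apply: (@ultra_cvg_real _ (complex.Re M)) => n.
  by apply: le_trans (pz _) _; move: (aM n); rewrite lecE => /andP[].
have [r ar] := bound_part _ (@Re_le_norm R).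
have [s as_] := bound_part _ (@Im_le_norm R).
exists (Complex r s); apply/cvgrPdist_lt => e.
move=> /[dup] /gtr0_real /complex_realP[er ->]; rewrite ltcR => e0.
have e2 : 0 < er / 2 by rewrite divr_gt0.
have near_r := cvgr_dist_lt _ _ ar _ e2.
have near_s := cvgr_dist_lt _ _ as_ _ e2.
apply: filterS (filterI (near_r _) (near_s _)) => n /= [rn sn].
apply: le_lt_trans (norm_le_ReIm _) _; rewrite ltcR.
by case: (a n) rn sn => x y /= rn sn; rewrite (splitr er); apply: ltrD.
Qed.

Definition ulim (a : nat -> C) : C := lim (a @ G).

Lemma ulimE a l : a @ G --> l -> ulim a = l.
Proof. by move=> al; apply: (cvg_lim (@norm_hausdorff _ _)). Qed.

Lemma ulim_cvg a l : a @ \oo --> l -> ulim a = l.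
Proof. by move=> al; apply: ulimE => A /al; apply: G_free. Qed.

Lemma cvg_ulim a : bounded_seq a -> a @ G --> ulim a.
Proof. by move=> /ultra_cvg[l al]; rewrite (ulimE al). Qed.

Lemma ulim_cst c : ulim (fun=> c) = c.
Proof. by apply: ulimE; exact: cvg_cst. Qed.

Lemma ulimD a b : bounded_seq a -> bounded_seq b ->
  ulim (fun n => a n + b n) = ulim a + ulim b.
Proof. by move=> /cvg_ulim ab /cvg_ulim bb; apply: ulimE; exact: (cvgD ab bb). Qed.

Lemma ulimMl c a : bounded_seq a -> ulim (fun n => c * a n) = c * ulim a.
Proof. by move=> /cvg_ulim ab; apply: ulimE; exact: (cvgM (cvg_cst c) ab). Qed.

Lemma ulim_norm_le a e : (forall n, `|a n| <= e) -> `|ulim a| <= e.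
Proof.
move=> ae; apply/ler_addgt0Pr => eps eps0.
have near_a := cvgr_dist_lt _ _ (cvg_ulim (ex_intro _ e ae)) _ eps0.
have [n an] := filter_ex (near_a _).
rewrite -[ulim a](subrK (a n)) addrC.
by apply: le_trans (ler_normD _ _) _; apply: lerD; [exact: ae | exact: ltW].
Qed.

End UltraLimit.

Section BoundedOperators.
Variables (R : realType) (H K : normedModType R[i]).

Lemma bounded_opP (f : H -> K) :
  bounded_op f <-> linear f /\ exists2 c, 0 <= c & forall x, `|f x| <= c * `|x|.
Proof.
split=> [[f_lin f_cont]|[f_lin [c c0 fc]]];
  pose fL : {linear H -> K} := HB.pack f (GRing.isLinear.Build _ _ _ _ f f_lin).
- have := (linear_boundedP fL).1 (@continuous_linear_bounded _ _ _ 0 fL (f_cont 0)).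
  move=> [M [M_real fM]]; split => //; exists (`|M| + 1); first by rewrite addr_ge0.
  by apply: fM; rewrite (le_lt_trans (real_ler_norm M_real)) // ltrDl ltr01.
- split => //; apply: (@bounded_linear_continuous _ _ _ fL); apply/linear_boundedP.
  exists c; split; first exact: ger0_real.
  by move=> r cr x; apply: le_trans (fc x) _; apply: ler_wpM2r => //; apply: ltW.
Qed.

Lemma bounded_opN (f : H -> K) : bounded_op f -> bounded_op (fun x => - f x).
Proof.
move=> /bounded_opP[f_lin [c c0 fc]]; apply/bounded_opP; split.
  by move=> a u v; rewrite f_lin opprD scalerN.
by exists c => // x; rewrite normrN.
Qed.

Lemma bounded_seq_op (f : H -> K) (w : nat -> H) :
  bounded_op f -> bounded_seq w -> bounded_seq (fun n => f (w n)).
Proof.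
move=> /bounded_opP[_ [c c0 fc]] [M wM]; exists (c * M) => n.
by apply: le_trans (fc _) _; apply: ler_wpM2l.
Qed.

End BoundedOperators.

Lemma bounded_seqD (C : numDomainType) (V : normedZmodType C) (u v : nat -> V) :
  bounded_seq u -> bounded_seq v -> bounded_seq (fun n => u n + v n).
Proof.
move=> [Mu uM] [Mv vM]; exists (Mu + Mv) => n.
by apply: le_trans (ler_normD _ _) _; apply: lerD.
Qed.

Lemma bounded_seqZ (R : realType) (V : normedModType R[i]) (a : R[i]) (u : nat -> V) :
  bounded_seq u -> bounded_seq (fun n => a *: u n).
Proof. by move=> [M uM]; exists (`|a| * M) => n; rewrite normrZ ler_wpM2l. Qed.

Section Adjoint.
Variables (R : realType) (H K : normedModType R[i]).
Variables (ipH : H -> H -> R[i]) (ipK : K -> K -> R[i]).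
Hypotheses (hipH : is_inner_product ipH) (hipK : is_inner_product ipK).
Variables (f : H -> K) (fs : K -> H).
Hypothesis f_fs : is_adjoint ipH ipK f fs.

Lemma adjoint_linear : linear fs.
Proof.
move=> a u v; apply: (ip_injr hipH) => y.
by rewrite -f_fs (ipDr hipK) (ipZr hipK) !f_fs -(ipZr hipH) -(ipDr hipH).
Qed.

Lemma adjoint_contraction : (forall x, `|f x| <= `|x|) -> forall y, `|fs y| <= `|y|.
Proof.
move=> f_contr y; have [->|fsy0] := eqVneq (fs y) 0; first by rewrite normr0.
have fsy_gt0 : 0 < `|fs y| by rewrite normr_gt0.
rewrite -(ler_pM2l fsy_gt0) -expr2 -[_ ^+ 2]ger0_norm ?exprn_ge0 // -(ipxx hipH) -f_fs.
apply: le_trans (cauchy_schwarz hipK _ _) _.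
by apply: ler_wpM2r.
Qed.

End Adjoint.

Lemma exists_adjoint (R : realType) (H : completeNormedModType R[i])
    (K : normedModType R[i]) (ipH : H -> H -> R[i]) (ipK : K -> K -> R[i])
    (f : H -> K) :
  is_inner_product ipH -> is_inner_product ipK -> bounded_op f ->
  exists fs : K -> H, is_adjoint ipH ipK f fs.
Proof.
move=> hipH hipK /bounded_opP[f_lin [c c0 fc]].
suff /choice[fs f_fs] y : exists r, forall x, ipK (f x) y = ipH x r by exists fs.
apply: (riesz_representation hipH (C := c * `|y|)).
- by move=> u v; rewrite (linD f_lin) (ipDl hipK).
- by move=> a u; rewrite (linZ f_lin) (ipZl hipK).
- by rewrite mulr_ge0.
- move=> x; apply: le_trans (cauchy_schwarz hipK _ _) _.
  by rewrite mulrAC; apply: ler_wpM2r.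
Qed.

Section Isometry.
Variables (R : realType) (H : normedModType R[i]) (ip : H -> H -> R[i]).
Hypothesis hip : is_inner_product ip.
Variables (V Vs : H -> H).
Hypotheses (V_iso : is_isometry V) (V_Vs : is_adjoint ip ip V Vs).

Lemma isometry_adjoint_contraction n u : `|iter n Vs u| <= `|u|.
Proof.
elim: n => [|n IHn] //=; apply: le_trans IHn.
by apply: (adjoint_contraction hip hip V_Vs) => x; rewrite V_iso.
Qed.

Lemma isometry_adjointK : cancel V Vs.
Proof.
move=> y; have ip_y : ip y (Vs (V y)) = `|y| ^+ 2 by rewrite -V_Vs (ipxx hip) V_iso.
have ip_y' : ip (Vs (V y)) y = `|y| ^+ 2.
  by rewrite (ipC hip) ip_y -(ipxx hip) (conj_ipxx hip).
have Vs_le : `|Vs (V y)| ^+ 2 <= `|y| ^+ 2.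
  rewrite ler_pXn2r ?nnegrE // -(V_iso y).
  exact: (isometry_adjoint_contraction 1).
apply/eqP; rewrite -subr_eq0 -normr_eq0 -sqrf_eq0 eq_le exprn_ge0 // andbT.
by rewrite (normB_sqr hip) ip_y' ip_y subrK subr_le0.
Qed.

End Isometry.

Section WeakUltraLimit.
Variables (R : realType) (K : completeNormedModType R[i]) (ip : K -> K -> R[i]).
Hypothesis hip : is_inner_product ip.
Variable G : set_system nat.
Hypotheses (G_ultra : UltraFilter G) (G_free : \oo `<=` G).

Definition weak_ulim (w : nat -> K) (z : K) :=
  bounded_seq w /\ forall y, ulim G (fun n => ip y (w n)) = ip y z.

Lemma bounded_seq_ip y (w : nat -> K) :
  bounded_seq w -> bounded_seq (fun n => ip y (w n)).
Proof. by move=> [M wM]; exists (`|y| * M) => n; exact: cauchy_schwarz_le. Qed.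

Lemma weak_ulim_exists w : bounded_seq w -> exists z, weak_ulim w z.
Proof.
move=> /[dup] w_bd [M wM].
have ipw_bd y := bounded_seq_ip y w_bd.
suff [z wz] : exists z, forall y, ulim G (fun n => ip y (w n)) = ip y z.
  by exists z.
apply: (riesz_representation hip (C := M)).
- move=> u v; under eq_fun do rewrite (ipDl hip).
  exact: (ulimD G_ultra (ipw_bd u) (ipw_bd v)).
- move=> a u; under eq_fun do rewrite (ipZl hip).
  exact: (ulimMl G_ultra a (ipw_bd u)).
- exact: le_trans (wM 0%N).
- by move=> y; apply: ulim_norm_le => n; rewrite mulrC; exact: cauchy_schwarz_le.
Qed.

Lemma weak_ulim_unique w z1 z2 : weak_ulim w z1 -> weak_ulim w z2 -> z1 = z2.
Proof. by move=> [_ wz1] [_ wz2]; apply: (ip_injr hip) => y; rewrite -wz1 -wz2. Qed.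

Lemma weak_ulim_norm_le w z c : (forall n, `|w n| <= c) -> weak_ulim w z -> `|z| <= c.
Proof.
move=> wc [_ wz]; have [->|z0] := eqVneq z 0.
  by rewrite normr0; apply: le_trans (wc 0%N).
have z_gt0 : 0 < `|z| by rewrite normr_gt0.
rewrite -(ler_pM2l z_gt0) -expr2 -[_ ^+ 2]ger0_norm ?exprn_ge0 // -(ipxx hip) -wz.
by apply: ulim_norm_le => n; exact: cauchy_schwarz_le.
Qed.

Lemma weak_ulim_cst z : weak_ulim (fun=> z) z.
Proof. by split=> [|y]; [exists `|z| | exact: ulim_cst]. Qed.

Lemma weak_ulimD w1 w2 z1 z2 : weak_ulim w1 z1 -> weak_ulim w2 z2 ->
  weak_ulim (fun n => w1 n + w2 n) (z1 + z2).
Proof.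
move=> [w1_bd wz1] [w2_bd wz2]; split=> [|y]; first exact: bounded_seqD.
under eq_fun do rewrite (ipDr hip).
by rewrite ulimD ?wz1 ?wz2 ?(ipDr hip) //; exact: bounded_seq_ip.
Qed.

Lemma weak_ulimZ a w z : weak_ulim w z -> weak_ulim (fun n => a *: w n) (a *: z).
Proof.
move=> [w_bd wz]; split=> [|y]; first exact: bounded_seqZ.
under eq_fun do rewrite (ipZr hip).
by rewrite ulimMl ?wz ?(ipZr hip) //; exact: bounded_seq_ip.
Qed.

Lemma weak_ulim_div_natS w c : (forall n, `|w n| <= c / n.+1%:R) -> weak_ulim w 0.
Proof.
move=> wc; split=> [|y].
  exists c => n; apply: le_trans (wc n) _.
  have c0 : 0 <= c by have := wc 0%N; rewrite divr1; apply: le_trans.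
  by rewrite ler_pdivrMr ?ltr0n // ler_peMr // ler1n.
rewrite (ip0r hip); apply: ulim_cvg => //.
apply: (@cvg_div_natS_bound _ _ _ (`|y| * c)) => n.
by rewrite -mulrA; exact: cauchy_schwarz_le.
Qed.

Lemma weak_ulim_op (T : K -> K) w z : bounded_op T -> weak_ulim w z ->
  weak_ulim (fun n => T (w n)) (T z).
Proof.
move=> T_bop [w_bd wz]; split=> [|y]; first exact: bounded_seq_op.
have [Ts T_Ts] := exists_adjoint hip hip T_bop.
have ip_T u : ip y (T u) = ip (Ts y) u by rewrite (ipC hip) T_Ts -(ipC hip).
by under eq_fun do rewrite ip_T; rewrite wz ip_T.
Qed.

End WeakUltraLimit.

Section Necessity.
Variables (R : realType) (H K : normedModType R[i]) (ipH : H -> H -> R[i]).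
Hypothesis hipH : is_inner_product ipH.
Variables (V Vs : H -> H) (T : K -> K) (X Z : H -> K).
Hypotheses (V_iso : is_isometry V) (V_Vs : is_adjoint ipH ipH V Vs).
Hypotheses (T_lin : linear T) (T_pb : power_bounded T) (Z_bop : bounded_op Z).
Hypotheses (XZ : forall x, X x = T (Z x) - Z (V x)).
Hypothesis (ZVVs : forall x, Z (x - V (Vs x)) = 0).

Lemma solution_telescope n x :
  \sum_(0 <= j < n) iter j T (X (iter j.+1 Vs x)) = iter n T (Z (iter n Vs x)) - Z x.
Proof.
have ZVVs' u : Z (V (Vs u)) = Z u.
  by apply/eqP; rewrite eq_sym -subr_eq0 -(linB Z_bop.1) ZVVs.
pose u j := iter j T (Z (iter j Vs x)).
rewrite (eq_bigr (fun j => u j.+1 - u j)) ?telescope_sumr // => j _.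
by rewrite /u XZ (linB (linear_iter j T_lin)) iterS ZVVs' iterSr.
Qed.

Lemma solution_partial_sums_bounded :
  uniformly_bounded (fun n x => \sum_(0 <= j < n.+1) iter j T (X (iter j.+1 Vs x))).
Proof.
have [_ [cZ cZ0 Zc]] := (bounded_opP Z).1 Z_bop.
have [M TM] := T_pb.
pose c := `|M%:C%C| * cZ + cZ.
exists (complex.Re c) => n x.
rewrite RRe_real ?ger0_real ?addr_ge0 ?mulr_ge0 // solution_telescope.
apply: le_trans (ler_normB _ _) _; rewrite mulrDl; apply: lerD; last exact: Zc.
apply: le_trans (TM _ _) _; rewrite -mulrA.
apply: le_trans (ler_wpM2r (normr_ge0 _) (real_ler_norm _)) _.
  by apply/complex_realP; exists M.
apply: ler_wpM2l => //; apply: le_trans (Zc _) _; apply: ler_wpM2l => //.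
exact: (isometry_adjoint_contraction hipH V_iso V_Vs n.+1 x).
Qed.

End Necessity.

Section Sufficiency.
Variables (R : realType) (H : normedModType R[i]) (K : completeNormedModType R[i]).
Variables (ipH : H -> H -> R[i]) (ipK : K -> K -> R[i]).
Hypotheses (hipH : is_inner_product ipH) (hipK : is_inner_product ipK).
Variables (V Vs : H -> H) (T : K -> K) (X : H -> K) (M : R).
Hypotheses (V_Vs : is_adjoint ipH ipH V Vs) (T_bop : bounded_op T) (X_lin : linear X).
Hypothesis sums_le : forall n x,
  `|\sum_(0 <= j < n.+1) iter j T (X (iter j.+1 Vs x))| <= M%:C%C * `|x|.

Definition partial_sum n x := \sum_(0 <= j < n) iter j T (X (iter j.+1 Vs x)).

Definition cesaro_mean N x := N.+1%:R^-1 *: \sum_(0 <= n < N.+1) partial_sum n x.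

Let c := `|M%:C%C|.

Lemma partial_sum_le n x : `|partial_sum n x| <= c * `|x|.
Proof.
case: n => [|n]; first by rewrite /partial_sum big_geq // normr0 mulr_ge0 ?normr_ge0.
apply: le_trans (sums_le n x) _; apply: ler_wpM2r => //.
by apply: real_ler_norm; apply/complex_realP; exists M.
Qed.

Lemma cesaro_mean_le N x : `|cesaro_mean N x| <= c * `|x|.
Proof.
rewrite /cesaro_mean normrZ normfV normr_nat ler_pdivrMl ?ltr0n //.
apply: le_trans (ler_norm_sum _ _ _) _.
apply: le_trans (ler_sum _ (fun n _ => partial_sum_le n x)) _.
by rewrite sumr_const_nat subn0 mulr_natl.
Qed.

Let Vs_lin : linear Vs := adjoint_linear hipH hipH V_Vs.

Lemma partial_sum_linear n : linear (partial_sum n).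
Proof.
apply: linear_sumf => j.
have Vs_iter := linear_iter j.+1 Vs_lin.
exact: linear_comp (linear_comp Vs_iter X_lin) (linear_iter j T_bop.1).
Qed.

Lemma cesaro_mean_linear N : linear (cesaro_mean N).
Proof. exact/linear_scalef/linear_sumf/partial_sum_linear. Qed.

Lemma partial_sumS n x : partial_sum n.+1 x = T (partial_sum n (Vs x)) + X (Vs x).
Proof.
rewrite /partial_sum big_nat_recl //= (lin_sum T_bop.1) addrC.
by congr (_ + _); apply: eq_bigr => j _; rewrite -[Vs (iter j Vs x)]iterS iterSr.
Qed.

Lemma cesaro_meanE N x : cesaro_mean N x =
  T (cesaro_mean N (Vs x)) + X (Vs x) - N.+1%:R^-1 *: partial_sum N.+1 x.
Proof.
have shift : \sum_(0 <= n < N.+1) partial_sum n.+1 x =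
    \sum_(0 <= n < N.+1) partial_sum n x + partial_sum N.+1 x.
  have P0 : partial_sum 0 x = 0 by rewrite /partial_sum big_geq.
  by rewrite -big_nat_recr //= [RHS]big_nat_recl //= P0 add0r.
have TP n : T (partial_sum n (Vs x)) = partial_sum n.+1 x - X (Vs x).
  by rewrite partial_sumS addrK.
rewrite /cesaro_mean (linZ T_bop.1) (lin_sum T_bop.1).
under [in RHS]eq_bigr do rewrite TP.
rewrite sumrB shift sumr_const_nat subn0 -[X (Vs x) *+ _]scaler_nat.
rewrite scalerBr scalerDr scalerA.
by rewrite mulVf ?pnatr_eq0 // scale1r subrK addrK.
Qed.

Lemma exists_cesaro_weak_limit :
  exists W : H -> K, bounded_op W /\ forall x, W x = T (W (Vs x)) + X (Vs x).
Proof.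
have [G [G_ultra G_free]] := @ultraFilterLemma nat \oo _.
have mean_bd x : bounded_seq (fun N => cesaro_mean N x).
  by exists (c * `|x|) => N; exact: cesaro_mean_le.
have /choice[W W_lim] x := weak_ulim_exists hipK G_ultra (mean_bd x).
have W_lin : linear W.
  move=> a u v; apply: (weak_ulim_unique hipK (W_lim (a *: u + v))).
  have -> : (fun N => cesaro_mean N (a *: u + v)) =
      (fun N => a *: cesaro_mean N u + cesaro_mean N v).
    by apply: funext => N; exact: cesaro_mean_linear.
  exact: (weak_ulimD hipK G_ultra (weak_ulimZ hipK G_ultra a (W_lim u)) (W_lim v)).
exists W; split.
  apply/bounded_opP; split => //; exists c => [|x]; first exact: normr_ge0.
  exact: (weak_ulim_norm_le hipK G_ultra (cesaro_mean_le^~ x) (W_lim x)).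
move=> x; apply: (weak_ulim_unique hipK (W_lim x)).
have defect_lim : weak_ulim ipK G (fun N => - (N.+1%:R^-1 *: partial_sum N.+1 x)) 0.
  apply: (weak_ulim_div_natS hipK G_ultra G_free (c := c * `|x|)) => N.
  rewrite normrN normrZ normfV normr_nat mulrC ler_wpM2r ?invr_ge0 ?ler0n //.
  exact: partial_sum_le.
have := weak_ulimD hipK G_ultra
  (weak_ulimD hipK G_ultra (weak_ulim_op hipK T_bop (W_lim (Vs x)))
                          (weak_ulim_cst ipK G_ultra (X (Vs x)))) defect_lim.
rewrite addr0; congr (weak_ulim _ _ _ _); apply: funext => N.
by rewrite [cesaro_mean N x]cesaro_meanE.
Qed.

End Sufficiency.

Theorem theorem2p1 (R : realType)
  (H K : completeNormedModType R[i])
  (ipH : H -> H -> R[i]) (ipK : K -> K -> R[i])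
  (hipH : is_inner_product ipH) (hipK : is_inner_product ipK)
  (V : H -> H) (Vs : H -> H) (T : K -> K) (X : H -> K)
  (hV : bounded_op V) (hViso : is_isometry V) (hVs : is_adjoint ipH ipH V Vs)
  (hT : bounded_op T) (hTpb : power_bounded T)
  (hX : bounded_op X) :
  (exists Z : H -> K,
     [/\ bounded_op Z,
         forall x : H, X x = T (Z x) - Z (V x) &
         forall x : H, Z (x - V (Vs x)) = 0])
  <->
  uniformly_bounded
    (fun (n : nat) (x : H) =>
       \sum_(0 <= j < n.+1) iter j T (X (iter j.+1 Vs x))).
Proof.
split=> [[Z [Z_bop XZ ZVVs]] | [M sums_le]].
  exact: (solution_partial_sums_bounded hipH hViso hVs hT.1 hTpb Z_bop XZ ZVVs).
have [W [W_bop W_fix]] := exists_cesaro_weak_limit hipH hipK hVs hT hX.1 sums_le.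
have VsK := isometry_adjointK hipH hViso hVs.
exists (fun x => - W x); split.
- exact: bounded_opN.
- by move=> x; rewrite (linN hT.1) (W_fix (V x)) VsK opprK addKr.
- by move=> x; rewrite (linB W_bop.1) (W_fix (V (Vs x))) VsK -W_fix subrr oppr0.
Qed.
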